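(* Run WSU-UX with $K=2$ and any valid $(\eta,\gamma)$ on the two-phase loss sequence. Let $t>T_1$ be a round with $2^{-m}\le\pi_{t,1}\le 2^{-(m-1)}$ for some positive integer $m$. If arm 2 is pulled at least $k=\frac{2}{\eta}m$ times in rounds $t,t+1,\dots,T$, and $t'$ denotes the round immediately after the $\lceil k\rceil$-th such pull, then $\pi_{t',1}\ge\frac14$.
   Context: WSU-UX. Fix integers $K\ge 2$ and $T\ge 1$ and hyperparameters $\eta,\gamma$. The pair $(\eta,\gamma)$ is called valid if $\eta,\gamma\in(0,1/2)$ and $\eta K/\gamma\le 1/2$. Given a fixed loss sequence $\ell_t\in[0,1]^K$, WSU-UX sets $\pi_{1,i}=1/K$ and in each round $t$: forms $\tilde\pi_{t,i}=(1-\gamma)\pi_{t,i}+\gamma/K$; draws $I_t$ with $\Pr(I_t=i\mid\mathcal F_{t-1})=\tilde\pi_{t,i}$; sets $\hat\ell_{t,i}=\ell_{t,i}\mathbf 1[I_t=i]/\tilde\pi_{t,i}$; and updates $\pi_{t+1,i}=\pi_{t,i}\bigl(1-\eta(\hat\ell_{t,i}-\sum_{j}\pi_{t,j}\hat\ell_{t,j})\bigr)$; $\mathcal F_t$ is the history generated by $I_1,\dots,I_t$. Two-phase loss sequence ($K=2$, $T$ a multiple of $100$, $T_1=T/100$): $\ell_{t,1}=1,\ell_{t,2}=0$ for $1\le t\le T_1$ and $\ell_{t,1}=0,\ell_{t,2}=1$ for $T_1<t\le T$. *)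

From mathcomp Require Import all_boot all_order all_algebra.
Set Implicit Arguments. Unset Strict Implicit. Unset Printing Implicit Defensive.
Import Order.TTheory GRing.Theory Num.Theory.
Local Open Scope ring_scope.

Section WSU.
Variable R : archiRealFieldType.

Definition valid_params (K : nat) (eta gamma : R) : Prop :=
  [/\ 0 < eta, eta < 1/2, 0 < gamma, gamma < 1/2 & eta * K%:R / gamma <= 1/2].

Definition wsu_mix (K : nat) (gamma : R) (pi : 'I_K -> R) (i : 'I_K) : R :=
  (1 - gamma) * pi i + gamma / K%:R.

Definition wsu_lhat (K : nat) (gamma : R) (pi : 'I_K -> R) (l : 'I_K -> R)
  (It : 'I_K) (i : 'I_K) : R :=
  l i * (It == i)%:R / wsu_mix gamma pi i.

Definition wsu_step (K : nat) (eta gamma : R) (pi : 'I_K -> R) (l : 'I_K -> R)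
  (It : 'I_K) : 'I_K -> R :=
  fun i => pi i * (1 - eta * (wsu_lhat gamma pi l It i
                       - \sum_(j < K) pi j * wsu_lhat gamma pi l It j)).

(* wsu_pi_aux n = pi_{n+1}; rounds are numbered 1,2,...; I t is the arm
   pulled in round t, loss t is the loss vector of round t. *)
Fixpoint wsu_pi_aux (K : nat) (eta gamma : R) (loss : nat -> 'I_K -> R)
  (I : nat -> 'I_K) (n : nat) : 'I_K -> R :=
  match n with
  | 0 => fun _ => 1 / K%:R
  | n'.+1 => wsu_step eta gamma (wsu_pi_aux eta gamma loss I n') (loss n) (I n)
  end.

Definition wsu_pi (K : nat) (eta gamma : R) (loss : nat -> 'I_K -> R)
  (I : nat -> 'I_K) (t : nat) : 'I_K -> R :=
  wsu_pi_aux eta gamma loss I t.-1.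

(* Two-phase loss sequence for K = 2; arm 1 is ord0, arm 2 is ord_max.
   T1 = T/100. *)
Definition two_phase_loss (T : nat) (t : nat) (i : 'I_2) : R :=
  if (t <= T %/ 100)%N then (if i == ord0 then 1 else 0)
  else (if i == ord0 then 0 else 1).

Definition pulls (K : nat) (I : nat -> 'I_K) (i : 'I_K) (a b : nat) : nat :=
  count (fun u => I u == i) (iota a (b.+1 - a)).

End WSU.

From mathcomp Require Import all_boot all_order all_algebra ring lra.
Import Order.TTheory GRing.Theory Num.Theory.
Local Open Scope ring_scope.

Set Implicit Arguments.
Unset Strict Implicit.
Unset Printing Implicit Defensive.

(* In the second phase arm 1 suffers no loss, so the update multiplies pi_1 by
   1 + eta <pi, lhat> >= 1: the weight of arm 1 never decreases.  When arm 2 is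
   pulled, <pi, lhat> = pi_2 / pi~_2 >= pi_2, which exceeds 3/4 as long as
   pi_1 < 1/4; then pi_1 grows by a factor at least 1 + 3 eta / 4.  So if pi_1
   were still below 1/4 after ceil(2m/eta) such pulls, it would be at least
   2^-m (1 + 3 eta / 4)^(2m/eta) >= 1.  The condition eta K / gamma <= 1/2 keeps
   every pi_t a probability vector, which these estimates rely on. *)

Section Growth.
Variable R : archiRealFieldType.

Lemma bernoulli_ler (n : nat) (c : R) : 0 <= c -> 1 + n%:R * c <= (1 + c) ^+ n.
Proof.
move=> c_ge0; elim: n => [|n IHn]; first by rewrite expr0 mul0r addr0.
have c2_ge0 : 0 <= n%:R * c * c by rewrite !mulr_ge0.
rewrite exprS -natr1.
apply: le_trans (ler_wpM2l _ IHn); last lra.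
have -> : (1 + c) * (1 + n%:R * c) = 1 + (n%:R + 1) * c + n%:R * c * c by ring.
lra.
Qed.

Lemma exp2_le_growth (eta : R) (m n : nat) :
  0 < eta -> eta < 1/2 -> 2 / eta * m%:R <= n%:R ->
  2 ^+ m <= (1 + eta * 3 / 4) ^+ n.
Proof.
move=> eta_gt0 eta_lt hn.
(* r := floor(2/eta) has r * eta > 2 - eta > 3/2, so 1 + r (3 eta / 4) >= 2. *)
have /andP[r_le r_gt] := truncn_itv (ltW (divr_gt0 (ltr0n R 2) eta_gt0)).
set r := Num.truncn (2 / eta) in r_le r_gt.
have etaK : 2 / eta * eta = 2 by rewrite mulfVK ?gt_eqF.
have r_eta_gt : 2 < r%:R * eta + eta.
  have : 2 / eta * eta < r.+1%:R * eta by rewrite ltr_pM2r.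
  by rewrite etaK -[r.+1]addn1 natrD mulrDl mul1r.
have two_le : 2 <= (1 + eta * 3 / 4) ^+ r.
  have c_ge0 : 0 <= eta * 3 / 4 by lra.
  apply: le_trans _ (bernoulli_ler r c_ge0).
  have -> : r%:R * (eta * 3 / 4) = r%:R * eta * 3 / 4 by ring.
  lra.
have rm_le : (r * m <= n)%N.
  rewrite -(ler_nat R) natrM; apply: le_trans hn.
  by rewrite ler_wpM2r.
apply: le_trans _ (ler_weXn2l _ rm_le); last lra.
by rewrite exprM lerXn2r // nnegrE ?exprn_ge0 //; lra.
Qed.
End Growth.

Section Distribution.
Variables (R : archiRealFieldType) (K : nat) (eta gamma : R).
Hypothesis K_gt0 : (0 < K)%N.
Hypothesis params : valid_params K eta gamma.
Implicit Types (p l : 'I_K -> R) (It i : 'I_K).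

Definition is_distribution (p : 'I_K -> R) : Prop :=
  (forall i, 0 <= p i) /\ \sum_i p i = 1.

Lemma distribution_le1 p i : is_distribution p -> p i <= 1.
Proof.
case=> p_ge0 <-; rewrite (bigD1 i) //= lerDl.
by apply: sumr_ge0 => j _.
Qed.

Lemma wsu_mix_ge p i : 0 <= p i -> gamma / K%:R <= wsu_mix gamma p i.
Proof.
have [_ _ _ gamma_lt _] := params.
by move=> p_ge0; rewrite /wsu_mix lerDr mulr_ge0 //; lra.
Qed.

Lemma wsu_mix_gt0 p i : 0 <= p i -> 0 < wsu_mix gamma p i.
Proof.
have [_ _ gamma_gt0 _ _] := params.
by move/wsu_mix_ge; apply: lt_le_trans; rewrite divr_gt0 ?ltr0n.
Qed.

Lemma wsu_mix_le1 p i : p i <= 1 -> wsu_mix gamma p i <= 1.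
Proof.
have [_ _ gamma_gt0 gamma_lt _] := params.
move=> p_le1; rewrite /wsu_mix.
have : gamma / K%:R <= gamma.
  by rewrite ler_pdivrMr ?ltr0n // ler_peMr ?ler1n // ltW.
have : (1 - gamma) * p i <= 1 - gamma by rewrite ler_piMr //; lra.
lra.
Qed.

Lemma wsu_lhat_ge0 p l It i :
  0 <= p i -> 0 <= l i -> 0 <= wsu_lhat gamma p l It i.
Proof.
move=> p_ge0 l_ge0; rewrite /wsu_lhat.
by rewrite divr_ge0 ?mulr_ge0 ?ler0n // ltW // (wsu_mix_gt0 p_ge0).
Qed.

Lemma eta_wsu_lhat_le p l It i :
  0 <= p i -> 0 <= l i <= 1 -> eta * wsu_lhat gamma p l It i <= 1/2.
Proof.
have [eta_gt0 _ gamma_gt0 _ eta_K_gamma] := params.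
move=> p_ge0 /andP[l_ge0 l_le1].
have mix_gt0 := wsu_mix_gt0 p_ge0.
have inv_mix_le : (wsu_mix gamma p i)^-1 <= K%:R / gamma.
  by rewrite -invf_div lef_pV2 ?posrE ?divr_gt0 ?ltr0n // wsu_mix_ge.
have loss_le1 : l i * (It == i)%:R <= 1 by case: (It == i); rewrite ?mulr1 ?mulr0.
rewrite /wsu_lhat; apply: le_trans eta_K_gamma.
rewrite -[eta * _ / gamma]mulrA; apply: ler_wpM2l; first exact: ltW.
apply: le_trans _ inv_mix_le.
by rewrite ler_pdivrMr // mulVf // gt_eqF.
Qed.

Lemma wsu_step_ge0 p l It i : is_distribution p -> (forall j, 0 <= l j <= 1) ->
  0 <= wsu_step eta gamma p l It i.
Proof.
have [eta_gt0 _ _ _ _] := params.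
move=> [p_ge0 _] l_bnd; rewrite /wsu_step.
set S := \sum_(j < K) _.
have S_ge0 : 0 <= S.
  apply: sumr_ge0 => j _; rewrite mulr_ge0 ?wsu_lhat_ge0 //.
  by case/andP: (l_bnd j).
have eta_x_le := eta_wsu_lhat_le It (p_ge0 i) (l_bnd i).
have etaS_ge0 := mulr_ge0 (ltW eta_gt0) S_ge0.
set x := wsu_lhat gamma p l It i in eta_x_le *.
rewrite mulr_ge0 //.
have -> : 1 - eta * (x - S) = 1 - eta * x + eta * S by ring.
lra.
Qed.

Lemma wsu_step_sum p l It : \sum_i p i = 1 -> \sum_i wsu_step eta gamma p l It i = 1.
Proof.
move=> p_sum; rewrite /wsu_step.
set S := \sum_(j < K) p j * wsu_lhat gamma p l It j.
have -> : \sum_i p i * (1 - eta * (wsu_lhat gamma p l It i - S))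
    = \sum_i p i * (1 + eta * S) - eta * \sum_i p i * wsu_lhat gamma p l It i.
  by rewrite [X in _ - X]mulr_sumr -sumrB; apply: eq_bigr => i _; ring.
by rewrite -/S -mulr_suml p_sum; ring.
Qed.

Lemma wsu_step_distribution p l It : is_distribution p -> (forall j, 0 <= l j <= 1) ->
  is_distribution (wsu_step eta gamma p l It).
Proof.
move=> p_distr l_bnd; split; first by move=> i; exact: wsu_step_ge0.
by apply: wsu_step_sum; case: p_distr.
Qed.

Lemma wsu_pi_aux_distribution (loss : nat -> 'I_K -> R) (I : nat -> 'I_K) n :
  (forall u j, 0 <= loss u j <= 1) -> is_distribution (wsu_pi_aux eta gamma loss I n).
Proof.
move=> loss_bnd; elim: n => [|n IHn] /=; last exact: wsu_step_distribution.
split=> [i|]; first by rewrite divr_ge0 ?ler0n.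
by rewrite sumr_const card_ord mul1r -[_^-1 *+ K]mulr_natr mulVf // pnatr_eq0 -lt0n.
Qed.

Lemma wsu_lhat_sum p l It :
  \sum_j p j * wsu_lhat gamma p l It j = p It * (l It / wsu_mix gamma p It).
Proof.
rewrite (bigD1 It) //= big1 ?addr0 => [|j /negbTE jNIt]; rewrite /wsu_lhat.
  by rewrite eqxx mulr1.
by rewrite eq_sym jNIt mulr0 mul0r mulr0.
Qed.

Lemma wsu_step_zero_loss p l It i : l i = 0 ->
  wsu_step eta gamma p l It i = p i * (1 + eta * (p It * (l It / wsu_mix gamma p It))).
Proof. by move=> li0; rewrite /wsu_step wsu_lhat_sum {1}/wsu_lhat li0 !mul0r; ring. Qed.

Lemma wsu_step_zero_loss_ge p l It i :
  is_distribution p -> (forall j, 0 <= l j <= 1) -> l i = 0 ->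
  p i * (1 + eta * (p It * l It)) <= wsu_step eta gamma p l It i.
Proof.
have [eta_gt0 _ _ _ _] := params.
move=> p_distr l_bnd li0; have [p_ge0 _] := p_distr.
have /andP[lIt_ge0 _] := l_bnd It.
have mix_gt0 := wsu_mix_gt0 (p_ge0 It).
have mix_le1 := wsu_mix_le1 (distribution_le1 It p_distr).
rewrite wsu_step_zero_loss //; apply: ler_wpM2l => //.
rewrite lerD2l; apply: ler_wpM2l; first exact: ltW.
apply: ler_wpM2l => //.
by rewrite ler_pdivlMr // ler_piMr.
Qed.
End Distribution.

Lemma sumr_ord2 (V : nmodType) (F : 'I_2 -> V) : \sum_(i < 2) F i = F ord0 + F ord_max.
Proof. by rewrite big_ord_recr big_ord1; congr (F _ + _); apply: val_inj. Qed.

Section TwoPhase.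
Variables (R : archiRealFieldType) (T : nat) (eta gamma : R) (I : nat -> 'I_2).
Hypothesis params : valid_params 2 eta gamma.
Local Notation pi := (wsu_pi_aux eta gamma (two_phase_loss R T) I).

Lemma two_phase_loss_bound u i : 0 <= two_phase_loss R T u i <= 1.
Proof. by rewrite /two_phase_loss; case: ifP => _; case: ifP => _; rewrite ?lexx ?ler01. Qed.

Lemma two_phase_loss_late u : (T %/ 100 < u)%N ->
  two_phase_loss R T u ord0 = 0 /\ two_phase_loss R T u ord_max = 1.
Proof. by move=> late; rewrite /two_phase_loss leqNgt late. Qed.

Lemma pi_distribution n : is_distribution (pi n).
Proof. exact: (wsu_pi_aux_distribution (ltn0Sn 1) params I n two_phase_loss_bound). Qed.

Lemma pi_arm1_nondecr n : (T %/ 100 <= n)%N -> pi n ord0 <= pi n.+1 ord0.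
Proof.
have [eta_gt0 _ _ _ _] := params.
move=> late; have [loss0 _] := two_phase_loss_late (late : (T %/ 100 < n.+1)%N).
have [p_ge0 _] := pi_distribution n.
apply: (le_trans _ (wsu_step_zero_loss_ge (ltn0Sn 1) params (I n.+1)
  (pi_distribution n) (two_phase_loss_bound _) loss0)).
rewrite ler_peMr // lerDl; apply: mulr_ge0; first exact: ltW.
by apply: mulr_ge0 => //; case/andP: (two_phase_loss_bound n.+1 (I n.+1)).
Qed.

Lemma pi_arm1_growth n : (T %/ 100 <= n)%N -> I n.+1 = ord_max ->
  pi n ord0 < 1/4 -> pi n ord0 * (1 + eta * 3 / 4) <= pi n.+1 ord0.
Proof.
have [eta_gt0 _ _ _ _] := params.
move=> late pull_max low.
have [loss0 loss1] := two_phase_loss_late (late : (T %/ 100 < n.+1)%N).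
have p_distr := pi_distribution n; have [p_ge0 p_sum] := p_distr.
rewrite sumr_ord2 in p_sum.
apply: (le_trans _ (wsu_step_zero_loss_ge (ltn0Sn 1) params (I n.+1) p_distr
  (two_phase_loss_bound _) loss0)).
rewrite pull_max loss1 mulr1; apply: ler_wpM2l => //.
rewrite lerD2l -mulrA; apply: ler_wpM2l; first exact: ltW.
lra.
Qed.

Lemma pi_arm1_geometric t' d : (T %/ 100 <= t')%N -> pi (t' + d) ord0 < 1/4 ->
  pi t' ord0 * (1 + eta * 3 / 4) ^+ count (fun u => I u == ord_max) (iota t'.+1 d)
    <= pi (t' + d) ord0.
Proof.
have [eta_gt0 _ _ _ _] := params.
have c_ge0 : 0 <= 1 + eta * 3 / 4 by lra.
move=> late; elim: d => [|d IHd] low; first by rewrite addn0 expr0 mulr1.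
have late_d : (T %/ 100 <= t' + d)%N by rewrite (leq_trans late) ?leq_addr.
have mono := pi_arm1_nondecr late_d.
rewrite addnS in low mono *.
have IH := IHd (le_lt_trans mono low).
rewrite -[d.+1]addn1 iotaD count_cat /= addn0 addSn.
case: eqP => [pull_max|_]; last by rewrite addn0; apply: le_trans mono.
rewrite exprD expr1 mulrA; apply: le_trans (pi_arm1_growth late_d pull_max _) => //.
  exact: ler_wpM2r IH.
exact: le_lt_trans mono low.
Qed.
End TwoPhase.

Theorem mainTheorem16 (R : archiRealFieldType) (T : nat) (eta gamma : R)
  (I : nat -> 'I_2) (t m s : nat) :
  (0 < T)%N -> (100 %| T)%N ->
  valid_params 2 eta gamma ->
  (T %/ 100 < t)%N -> (t <= T)%N ->
  (0 < m)%N ->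
  2^-m <= wsu_pi eta gamma (two_phase_loss R T) I t ord0 <= 2^-(m.-1) ->
  (t <= s)%N -> (s <= T)%N ->
  I s = ord_max ->
  (pulls I ord_max t s)%:~R = Num.ceil (2 / eta * m%:R) ->
  1/4 <= wsu_pi eta gamma (two_phase_loss R T) I s.+1 ord0.
Proof.
move=> _ _ params + _ _ /andP[pi_t_ge _] + _ _ n_pulls.
have [eta_gt0 eta_lt _ _ _] := params.
case: t pi_t_ge n_pulls => [//|t'] pi_t_ge n_pulls late t'_lt_s.
rewrite /wsu_pi /= in pi_t_ge *; rewrite /pulls subSS in n_pulls.
set n := count _ _ in n_pulls.
have n_ge : 2 / eta * m%:R <= n%:R.
  by apply: le_trans (ceil_ge _) _; rewrite -n_pulls intz -pmulrn.
rewrite leNgt; apply/negP => low.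
have := pi_arm1_geometric (I := I) params (late : (T %/ 100 <= t')%N) (d := s - t').
rewrite subnKC ?(ltnW t'_lt_s) // => /(_ low) pi_s_ge.
have pow_ge := exp2_le_growth eta_gt0 eta_lt n_ge.
have two_m_gt0 : 0 < 2 ^+ m :> R by rewrite exprn_gt0.
suff : 1 <= wsu_pi_aux eta gamma (two_phase_loss R T) I s ord0 by lra.
apply: le_trans pi_s_ge; rewrite -[X in X <= _](mulVf (lt0r_neq0 two_m_gt0)).
by apply: ler_pM => //; rewrite ?invr_ge0 ltW.
Qed.
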